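(* In the setting below, if $g(x)$ is self-reciprocal and $\gcd(t_{22}(x),g_{12}(x))=1$, then $$\gcd\big(g_{11}'(x),\ g_{11}(x)\bar g_{11}(x)+g_{12}(x)\bar g_{12}(x)\big)=1.$$
   Context: Let $q$ be a prime power, $F=\mathbb{F}_q$, $m\ge1$ with $\gcd(q,m)=1$. For a nonzero polynomial $f$ of degree $k$, $f^*(x)=x^kf(x^{-1})$; $f$ is self-reciprocal if $f^*=\alpha f$ for some $\alpha\in F$. For a polynomial $f$ of degree at most $m$, $\bar f(x)=x^m f(x^{-1})$. Let $g_{11},g_{12}\in F[x]$ with $g_{11}\mid x^m-1$ and $\deg g_{12}<m$. Let $g=\gcd(g_{11},g_{12})$, $g_{11}=g\,g_{11}'$, $g_{22}=(x^m-1)/g_{11}'$, $g_{22}=g\,g_{22}'$, $r_{22}=\gcd(g_{22}',g_{22}'^* )$, $t_{22}=g_{22}'/r_{22}$. *)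

From mathcomp Require Import all_boot all_algebra all_field.
Set Implicit Arguments. Unset Strict Implicit. Unset Printing Implicit Defensive.
Import GRing.Theory.
Local Open Scope ring_scope.

(* Reciprocal f^*(x) = x^(deg f) f(1/x): coefficient list reversed. *)
Definition recip (F : fieldType) (f : {poly F}) : {poly F} :=
  \poly_(i < size f) f`_((size f).-1 - i).

Definition self_reciprocal (F : fieldType) (f : {poly F}) : Prop :=
  f != 0 /\ exists alpha : F, recip f = alpha *: f.

(* bar f (x) = x^m f(1/x), for deg f <= m. *)
Definition barm (F : fieldType) (m : nat) (f : {poly F}) : {poly F} :=
  \poly_(i < m.+1) f`_(m - i).

(* Since g11' divides g11, it suffices that g11' is coprime to g12 and to bar g12.
   Write x^m - 1 = g11' g h, with h = g22'; it is squarefree because gcd(q, m) = 1.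
   Then g11' is coprime to g = gcd(g11, g12), hence to g12.  If d divides g11' and
   bar g12, its reversal rev d divides g12, so it is coprime to g11'; it also divides
   rev g11', which divides the self-reciprocal x^m - 1 and is coprime to g ~ rev g,
   so rev d divides h.  The reversal of gcd(h, rev h) divides both g11' and h, so
   rev d is coprime to that gcd and divides t22; as t22 is coprime to g12, d is a
   constant. *)

From HB Require Import structures.
From mathcomp Require Import all_boot all_algebra all_field.
From mathcomp Require Import zify.

Set Implicit Arguments.
Unset Strict Implicit.
Unset Printing Implicit Defensive.

Import GRing.Theory.
Local Open Scope ring_scope.

Section Reversal.
Variable F : fieldType.
Implicit Types a b d f g h p : {poly F}.

Lemma coef_barm m f i : (barm m f)`_i = if (i <= m)%N then f`_(m - i) else 0.
Proof. by rewrite /barm coef_poly ltnS. Qed.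

Fact barm_is_linear m : linear (barm m : {poly F} -> {poly F}).
Proof.
move=> c p q; apply/polyP=> i.
by rewrite !(coefD, coefZ, coef_barm); case: ifP; rewrite ?mulr0 ?addr0.
Qed.

HB.instance Definition _ m :=
  GRing.isLinear.Build F {poly F} {poly F} _ (barm m) (barm_is_linear m).

Lemma barmXn m i : (i <= m)%N -> barm m ('X^i : {poly F}) = 'X^(m - i).
Proof.
move=> le_im; apply/polyP=> j; rewrite coef_barm !coefXn.
case: (leqP j m) => hj.
  by have -> : ((m - j)%N == i) = (j == (m - i)%N) by apply/eqP/eqP; lia.
by have -> : (j == (m - i)%N) = false by apply/eqP; lia.
Qed.

Lemma barmK m f : (size f <= m.+1)%N -> barm m (barm m f) = f.
Proof.
move=> le_fm; apply/polyP=> i; rewrite !coef_barm.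
case: (leqP i m) => hi; first by rewrite leq_subr subKn.
by rewrite nth_default // (leq_trans le_fm).
Qed.

Lemma size_barm m f : (size (barm m f) <= m.+1)%N.
Proof. exact: size_poly. Qed.

Lemma poly_expand n f : (size f <= n)%N -> f = \sum_(i < n) f`_i *: 'X^i.
Proof.
move=> le_fn; rewrite -poly_def; apply/polyP=> i; rewrite coef_poly.
by case: ltnP => // hi; rewrite nth_default // (leq_trans le_fn).
Qed.

Lemma barmM k l a b : (size a <= k.+1)%N -> (size b <= l.+1)%N ->
  barm (k + l) (a * b) = barm k a * barm l b.
Proof.
move=> le_ak le_bl.
rewrite (poly_expand le_ak) (poly_expand le_bl) big_distrl !linear_sum big_distrl.
apply: eq_bigr => i _; rewrite !big_distrr linear_sum; apply: eq_bigr => j _.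
have hi := ltn_ord i; have hj := ltn_ord j.
rewrite /= -scalerAl -scalerAr !linearZ /= -scalerAl -scalerAr -exprD.
by rewrite !barmXn -?exprD; [congr (_ *: (_ *: 'X^_)) | ..]; lia.
Qed.

Lemma recip_barm f : recip f = barm (size f).-1 f.
Proof.
rewrite /recip /barm; case E: (size f) => [|n] //=.
apply/polyP=> i; rewrite !coef_poly; case: ifP => // _.
by rewrite nth_default // E.
Qed.

Lemma coef0_recip f : (recip f)`_0 = lead_coef f.
Proof. by rewrite recip_barm coef_barm leq0n subn0. Qed.

Lemma poly_neq0_of_coef0 f : f`_0 != 0 -> f != 0.
Proof. by apply: contraNneq => ->; rewrite coef0. Qed.

Lemma size_recip f : f`_0 != 0 -> size (recip f) = size f.
Proof.
move=> f0; have f_gt0 : (0 < size f)%N by rewrite size_poly_gt0 poly_neq0_of_coef0.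
by rewrite recip_barm /barm size_poly_eq prednK // subnn.
Qed.

Lemma coef0_neq0_dvdp d p : d %| p -> p`_0 != 0 -> d`_0 != 0.
Proof. by case/dvdpP=> c ->; rewrite coef0M; apply: contraNneq => ->; rewrite mulr0. Qed.

Lemma dvdp_recip_barm k d p :
  d %| p -> p != 0 -> (size p <= k.+1)%N -> recip d %| barm k p.
Proof.
case/dvdpP=> c def_p p_neq0 le_pk.
have c_neq0 : c != 0 by apply: contraNneq p_neq0 => c0; rewrite def_p c0 mul0r.
have d_neq0 : d != 0 by apply: contraNneq p_neq0 => d0; rewrite def_p d0 mulr0.
have size_p := size_mul c_neq0 d_neq0; rewrite -def_p in size_p.
have [i size_c] : exists i, size c = i.+1.
  by exists (size c).-1; rewrite prednK ?size_poly_gt0.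
have [j size_d] : exists j, size d = j.+1.
  by exists (size d).-1; rewrite prednK ?size_poly_gt0.
rewrite size_p size_c size_d in le_pk.
have -> : k = ((k - j) + j)%N by lia.
by rewrite recip_barm def_p size_d barmM ?dvdp_mull ?size_c ?size_d //; lia.
Qed.

Lemma dvdp_recip_of_barm k d p :
  d %| barm k p -> p != 0 -> (size p <= k.+1)%N -> recip d %| p.
Proof.
move=> d_dvd p_neq0 le_pk; rewrite -(barmK le_pk).
apply: (dvdp_recip_barm d_dvd _ (size_barm _ _)).
by apply: contraNneq p_neq0 => bp0; rewrite -(barmK le_pk) bp0 linear0.
Qed.

Lemma dvdp_recip d p : d %| p -> p != 0 -> recip d %| recip p.
Proof.
move=> d_dvd p_neq0; rewrite [recip p]recip_barm.
exact: dvdp_recip_barm d_dvd p_neq0 (leqSpred _).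
Qed.

Lemma coprimep_recip a b : a`_0 != 0 -> b`_0 != 0 -> coprimep a b ->
  coprimep (recip a) (recip b).
Proof.
move=> a0 b0 cop_ab; have a_neq0 := poly_neq0_of_coef0 a0.
have b_neq0 := poly_neq0_of_coef0 b0.
apply/coprimepP => d da db; have d0 : d`_0 != 0.
  by apply: (coef0_neq0_dvdp da); rewrite coef0_recip lead_coef_eq0.
rewrite [recip a]recip_barm in da; rewrite [recip b]recip_barm in db.
rewrite -size_poly_eq1 -size_recip // size_poly_eq1; apply: (coprimepP _ _ cop_ab).
  exact: dvdp_recip_of_barm da a_neq0 (leqSpred _).
exact: dvdp_recip_of_barm db b_neq0 (leqSpred _).
Qed.

Lemma self_reciprocal_coef0 f : self_reciprocal f -> f`_0 != 0.
Proof.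
case=> f_neq0 [alpha recip_f]; have := coef0_recip f.
rewrite recip_f coefZ => lead_f; apply: contraNneq f_neq0 => f0.
by rewrite -lead_coef_eq0 -lead_f f0 mulr0.
Qed.

Lemma eqp_recip_self_reciprocal f : self_reciprocal f -> recip f %= f.
Proof.
move=> self_f; have [f_neq0 [alpha recip_f]] := self_f.
rewrite recip_f eqp_scale // ; apply: contraNneq f_neq0 => alpha0.
by rewrite -lead_coef_eq0 -coef0_recip recip_f alpha0 scale0r coef0.
Qed.

Lemma self_reciprocal_Xn_sub_1 m : (0 < m)%N -> self_reciprocal ('X^m - 1 : {poly F}).
Proof.
move=> m_gt0; have size_N : size ('X^m - 1 : {poly F}) = m.+1.
  by rewrite -polyC1 size_XnsubC.
split; first by rewrite -size_poly_eq0 size_N.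
exists (-1); rewrite recip_barm size_N linearB /= -(expr0 'X).
by rewrite !barmXn // subnn subn0 scaleN1r opprB.
Qed.

Lemma coprimep_divp_gcdp a b :
  coprimep (a %/ gcdp a b) (gcdp a b) -> coprimep (a %/ gcdp a b) b.
Proof.
have [-> | a_neq0] := eqVneq a 0; first by rewrite gcd0p div0p coprime0p.
move=> cop_g; rewrite -[X in coprimep _ X](divpK (dvdp_gcdr a b)).
rewrite coprimepMr cop_g andbT.
by rewrite coprimep_div_gcd // a_neq0.
Qed.

Section SelfReciprocalFactorization.
Variables a g h : {poly F}.
Hypotheses (sep_agh : separable_poly (a * g * h))
  (self_agh : self_reciprocal (a * g * h)) (self_g : self_reciprocal g).

Let a0 : a`_0 != 0.
Proof.
apply: coef0_neq0_dvdp (self_reciprocal_coef0 self_agh).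
by rewrite -mulrA dvdp_mulr.
Qed.

Let h0 : h`_0 != 0.
Proof.
apply: coef0_neq0_dvdp (self_reciprocal_coef0 self_agh).
by rewrite dvdp_mull.
Qed.

Let cop_ag : coprimep a g.
Proof. by move: sep_agh; rewrite !separable_mul => /and3P[/and3P[]]. Qed.

Let cop_ah : coprimep a h.
Proof. by move: sep_agh; rewrite !separable_mul coprimepMl => /and3P[_ _ /andP[]]. Qed.

Lemma recip_dvdp_cofactor d : d %| a -> coprimep (recip d) a -> recip d %| h.
Proof.
move=> d_dvd cop_da.
have rd_dvd : recip d %| recip a := dvdp_recip d_dvd (poly_neq0_of_coef0 a0).
have cop_dg : coprimep (recip d) g.
  apply: coprimep_dvdr rd_dvd _.
  rewrite -(eqp_coprimepr _ (eqp_recip_self_reciprocal self_g)).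
  exact: coprimep_recip a0 (self_reciprocal_coef0 self_g) cop_ag.
have : recip d %| a * g * h.
  have agh_neq0 := poly_neq0_of_coef0 (self_reciprocal_coef0 self_agh).
  rewrite -(eqp_dvdr _ (eqp_recip_self_reciprocal self_agh)) (dvdp_trans rd_dvd) //.
  by rewrite dvdp_recip // -mulrA dvdp_mulr.
by rewrite -mulrA Gauss_dvdpr // Gauss_dvdpr.
Qed.

Lemma coprimep_recip_gcdp d : d %| a -> coprimep (recip d) (gcdp h (recip h)).
Proof.
move=> d_dvd; apply: coprimep_dvdr (dvdp_recip d_dvd (poly_neq0_of_coef0 a0)) _.
exact: coprimep_dvdl (dvdp_gcdr _ _) (coprimep_recip a0 h0 cop_ah).
Qed.

Lemma recip_dvdp_reduced_cofactor d : d %| a -> coprimep (recip d) a ->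
  recip d %| h %/ gcdp h (recip h).
Proof.
move=> d_dvd cop_da; have := recip_dvdp_cofactor d_dvd cop_da.
by rewrite -{1}(divpK (dvdp_gcdl h (recip h))) Gauss_dvdpl // coprimep_recip_gcdp.
Qed.

Lemma coprimep_barm b k : coprimep a b -> coprimep (h %/ gcdp h (recip h)) b ->
  (size b <= k.+1)%N -> coprimep a (barm k b).
Proof.
have [-> | b_neq0] := eqVneq b 0; first by rewrite linear0.
move=> cop_ab cop_tb le_bk; apply/coprimepP => d da db.
have rdb : recip d %| b := dvdp_recip_of_barm db b_neq0 le_bk.
have d0 : d`_0 != 0 := coef0_neq0_dvdp da a0.
rewrite -size_poly_eq1 -size_recip // size_poly_eq1.
apply: (coprimepP _ _ cop_tb _ _ rdb).
apply: recip_dvdp_reduced_cofactor da _.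
by rewrite coprimep_sym (coprimep_dvdl rdb cop_ab).
Qed.

End SelfReciprocalFactorization.
End Reversal.

Lemma natf_neq0_coprime_card (F : finFieldType) m : coprime #|F| m -> m%:R != 0 :> F.
Proof.
have [p p_pr pchar_p] := finPcharP F.
have card_F : #|F| = (p ^ logn p #|F|)%N := card_pprimeChar pchar_p.
have logF_gt0 : (0 < logn p #|F|)%N.
  by rewrite lt0n; apply: contraTneq (finNzRing_gt1 F) => log0; rewrite card_F log0.
by rewrite card_F coprime_pexpl // prime_coprime // (dvdn_pcharf pchar_p).
Qed.

Theorem lemma4p2 (F : finFieldType) (m : nat) (g11 g12 : {poly F}) :
  (0 < m)%N -> coprime #|F| m ->
  g11 %| 'X^m - 1 -> (size g12 <= m)%N ->
  let g := gcdp g11 g12 in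
  let g11' := g11 %/ g in
  let g22 := ('X^m - 1) %/ g11' in
  let g22' := g22 %/ g in
  let r22 := gcdp g22' (recip g22') in
  let t22 := g22' %/ r22 in
  self_reciprocal g ->
  coprimep t22 g12 ->
  coprimep g11' (g11 * barm m g11 + g12 * barm m g12).
Proof.
move=> m_gt0 cop_m dvd_g11 size_g12 g g11' g22 g22' r22 t22 self_g cop_t12.
have [h def_N] := dvdpP _ _ dvd_g11.
have g11E : g11 = g11' * g by rewrite divpK ?dvdp_gcdl.
have NE : 'X^m - 1 = g11' * g * h by rewrite def_N mulrC g11E.
have sep_N := separable_Xn_sub_1 (natf_neq0_coprime_card cop_m).
have self_N := self_reciprocal_Xn_sub_1 F m_gt0.
rewrite NE in sep_N self_N.
have [N_neq0 _] := self_N.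
have t22E : t22 = h %/ gcdp h (recip h).
  have g11'_neq0 : g11' != 0 by apply: contraNneq N_neq0 => ->; rewrite !mul0r.
  have g_neq0 : g != 0 by apply: contraNneq N_neq0 => ->; rewrite mulr0 mul0r.
  by rewrite /t22 /r22 /g22' /g22 NE -mulrA !mulKp.
have cop_g11'_g12 : coprimep g11' g12.
  apply: coprimep_divp_gcdp.
  by move: sep_N; rewrite !separable_mul => /and3P[/and3P[]].
rewrite {1}g11E -mulrA [g11' * _]mulrC coprimep_addl_mul coprimepMr.
rewrite cop_g11'_g12 andTb.
by rewrite (coprimep_barm sep_N self_N self_g cop_g11'_g12) -?t22E // leqW.
Qed.
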